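(* Let $n\ge 2$, $b>0$, and let $p_0,\dots,p_{n-2}$ be complex-valued, $C^\infty$, $b$-periodic functions on $\mathbb{R}$; let $\mathcal{L}u := u^{(n)}+\sum_{k=0}^{n-2}p_k(x)u^{(k)}$. If $\psi$ is an eigenfunction of the multipoint problem $$\mathcal{L}u=\lambda u,\qquad u(0)=u(b)=\cdots=u((n-1)b)=0$$ (i.e. a nontrivial solution for some $\lambda\in\mathbb{C}$), then $\psi(kb)=0$ for all $k\in\mathbb{Z}$. *)

From Stdlib Require Import Reals.
From Coquelicot Require Import Coquelicot.
Open Scope R_scope.

Definition derivs_upto (f : R -> C) (n : nat) (D : nat -> R -> C) : Prop :=
  (forall x, D O x = f x) /\
  (forall (k : nat) (x : R), (k < n)%nat -> is_derive (D k) x (D (S k) x)).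

Definition smooth (f : R -> C) : Prop :=
  exists D : nat -> R -> C,
    (forall x, D O x = f x) /\
    (forall (k : nat) (x : R), is_derive (D k) x (D (S k) x)).

Definition periodic (f : R -> C) (b : R) : Prop :=
  forall x, f (x + b) = f x.

(* The translates [x |-> psi (x + j b)], [j = 0, ..., n], all solve the periodic
   equation [L u = lambda u], whose solutions are determined by their [n] Cauchy
   data at [0]. So some nontrivial combination [sum_j c_j psi (x + j b)] has zero
   Cauchy data, and by uniqueness (a Gronwall estimate on [sum_i |u^(i)|^2], which
   uses that the continuous periodic coefficients are bounded) it vanishes
   identically. At [x = m b] this is a linear recurrence
   [sum_j c_j psi ((m + j) b) = 0] of length at most [n + 1]; as [psi (k b)]
   vanishes for the [n] consecutive values [k = 0, ..., n - 1], solving the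
   recurrence forward and backward shows that it vanishes for every [k]. *)

From Stdlib Require Import Reals ZArith Lra Lia Classical.
From Coquelicot Require Import Coquelicot.
Open Scope R_scope.

Lemma is_derive_linear {V W : NormedModule R_AbsRing} (L : V -> W) (f : R -> V) x l :
  is_linear L -> is_derive f x l -> is_derive (fun y => L (f y)) x (L l).
Proof.
  intros HL Hf. eapply filterdiff_ext_lin.
  - apply filterdiff_comp; [exact Hf | now apply filterdiff_linear].
  - intros y; simpl. apply (linear_scal L HL).
Qed.

Lemma is_derive_Re (f : R -> C) x l : is_derive f x l -> is_derive (fun y => Re (f y)) x (Re l).
Proof. apply (is_derive_linear (fun z : C_R_NormedModule => fst z)), is_linear_fst. Qed.

Lemma is_derive_Im (f : R -> C) x l : is_derive f x l -> is_derive (fun y => Im (f y)) x (Im l).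
Proof. apply (is_derive_linear (fun z : C_R_NormedModule => snd z)), is_linear_snd. Qed.

Lemma norm_C_R (z : C) : @norm R_AbsRing C_R_NormedModule z = Cmod z.
Proof.
  unfold norm; simpl. unfold prod_norm, Cmod; simpl. unfold abs; simpl.
  now rewrite !Rmult_1_r, <- !Rabs_mult, !Rabs_pos_eq by nra.
Qed.

Lemma is_linear_Cmult_l (c : C) :
  @is_linear R_AbsRing C_R_NormedModule C_R_NormedModule (Cmult c).
Proof.
  split.
  - intros x y. change (c * (x + y) = c * x + c * y)%C. ring.
  - intros k x. destruct c, x. unfold scal; simpl. unfold prod_scal, Cmult; simpl.
    unfold scal; simpl; unfold mult; simpl. f_equal; ring.
  - exists (Cmod c + 1). split; [pose proof (Cmod_ge_0 c); lra|].
    intros x. rewrite !norm_C_R, Cmod_mult. pose proof (Cmod_ge_0 x); nra.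
Qed.

Lemma is_derive_Cmult_l (c : C) (f : R -> C) x l :
  is_derive f x l -> is_derive (fun y => c * f y)%C x (c * l)%C.
Proof.
  apply (is_derive_linear (Cmult c : C_R_NormedModule -> C_R_NormedModule)), is_linear_Cmult_l.
Qed.

Lemma is_derive_shift {V : NormedModule R_AbsRing} (f : R -> V) a x l :
  is_derive f (x + a) l -> is_derive (fun y => f (y + a)) x l.
Proof.
  intros Hf. rewrite <- (scal_one l).
  apply (is_derive_comp f (fun y => y + a)); [exact Hf|].
  change (@one R_AbsRing) with 1. auto_derive; [easy | ring].
Qed.

Lemma is_derive_Cmod2 (f : R -> C) x l : is_derive f x l ->
  is_derive (fun y => Cmod (f y) ^ 2) x (2 * Re (Cconj (f x) * l)).
Proof.
  intros Hf.
  apply (is_derive_ext (fun y => Re (f y) ^ 2 + Im (f y) ^ 2)).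
  { intros y. now rewrite Cmod2_alt. }
  replace (2 * Re (Cconj (f x) * l))
    with (INR 2 * Re l * Re (f x) ^ 1 + INR 2 * Im l * Im (f x) ^ 1)
    by (destruct (f x), l; simpl; ring).
  apply (is_derive_plus (fun y => Re (f y) ^ 2) (fun y => Im (f y) ^ 2));
    apply is_derive_pow; [apply is_derive_Re | apply is_derive_Im]; exact Hf.
Qed.

Lemma is_derive_continuity_pt (f : R -> R) x l : is_derive f x l -> continuity_pt f x.
Proof.
  intros Hf. apply continuity_pt_filterlim.
  apply (ex_derive_continuous (K := R_AbsRing) (V := R_NormedModule)). now exists l.
Qed.

Lemma is_derive_continuity_pt_Cmod (f : R -> C) x l :
  is_derive f x l -> continuity_pt (fun y => Cmod (f y)) x.
Proof.
  intros Hf.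
  apply (continuity_pt_ext (fun y => sqrt (Cmod (f y) ^ 2))).
  { intros y. apply sqrt_pow2, Cmod_ge_0. }
  apply (continuity_pt_comp (fun y => Cmod (f y) ^ 2) sqrt).
  - exact (is_derive_continuity_pt _ _ _ (is_derive_Cmod2 f x l Hf)).
  - apply continuity_pt_sqrt, pow2_ge_0.
Qed.

Lemma Re_Cconj_mult_le (a b : C) : Rabs (Re (Cconj a * b)) <= Cmod a * Cmod b.
Proof. eapply Rle_trans; [apply re_le_Cmod|]. rewrite Cmod_mult, Cmod_conj. lra. Qed.

Lemma sum_n_Cext_loc (f g : nat -> C) N :
  (forall j, (j <= N)%nat -> f j = g j) -> sum_n f N = sum_n g N.
Proof. exact (sum_n_ext_loc f g N). Qed.

Lemma sum_n_Cplus (f g : nat -> C) N :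
  sum_n (fun k => f k + g k)%C N = (sum_n f N + sum_n g N)%C.
Proof. exact (sum_n_plus f g N). Qed.

Lemma sum_n_Cmult_l (a : C) (f : nat -> C) N :
  sum_n (fun k => a * f k)%C N = (a * sum_n f N)%C.
Proof. exact (sum_n_mult_l a f N). Qed.

Lemma sum_n_Cmult_r (a : C) (f : nat -> C) N :
  sum_n (fun k => f k * a)%C N = (sum_n f N * a)%C.
Proof. exact (sum_n_mult_r a f N). Qed.

Lemma sum_n_single (f : nat -> C) N j0 : (j0 <= N)%nat ->
  (forall j, (j <= N)%nat -> j <> j0 -> f j = 0%C) -> sum_n f N = f j0.
Proof.
  induction N as [|N IH]; intros Hj0 Hf.
  - rewrite sum_O. now replace j0 with O by lia.
  - rewrite sum_Sn. change (sum_n f N + f (S N) = f j0)%C.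
    destruct (Nat.eq_dec j0 (S N)) as [->|Hne].
    + rewrite (sum_n_ext_loc _ (fun _ => zero)).
      * change (sum_n_m (fun _ => zero) 0 N + f (S N) = f (S N))%C.
        rewrite sum_n_m_const_zero. change (0 + f (S N) = f (S N))%C. ring.
      * intros j Hj. apply Hf; lia.
    + rewrite IH, (Hf (S N)) by (lia || (intros; apply Hf; lia)). ring.
Qed.

Lemma Cmod_sum_n_le (f : nat -> C) N :
  Cmod (sum_n f N) <= sum_f_R0 (fun k => Cmod (f k)) N.
Proof.
  induction N as [|N IH]; simpl.
  - now rewrite sum_O.
  - rewrite sum_Sn. eapply Rle_trans; [apply Cmod_triangle | lra].
Qed.

Lemma sum_f_R0_ge_term (f : nat -> R) N k :
  (forall i, 0 <= f i) -> (k <= N)%nat -> f k <= sum_f_R0 f N.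
Proof.
  intros Hf Hk. induction N as [|N IH]; simpl.
  - now replace k with O by lia.
  - destruct (Nat.eq_dec k (S N)) as [->|Hne].
    + pose proof (cond_pos_sum f N Hf). lra.
    + pose proof (Hf (S N)). assert (f k <= sum_f_R0 f N) by (apply IH; lia). lra.
Qed.

Lemma exists_nontrivial_relation (m : nat) (v : nat -> nat -> C) :
  exists c : nat -> C, (exists j, (j <= m)%nat /\ c j <> 0%C) /\
    forall i, (i < m)%nat -> sum_n (fun j => c j * v j i)%C m = 0 :> C.
Proof.
  revert v. induction m as [|m IH]; intros v.
  { exists (fun _ => 1%C). split; [exists O; split; [lia | apply C1_nz] | intros; lia]. }
  destruct (classic (exists i0, (i0 < S m)%nat /\ v (S m) i0 <> 0%C))
    as [[i0 [Hi0 Hpiv]] | Hzero].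
  - (* Eliminate coordinate [i0] with the pivot vector [v (S m)] and recurse on the rest. *)
    set (skip := fun i => if (i <? i0)%nat then i else S i).
    set (w := fun j i => (v j (skip i) - v j i0 / v (S m) i0 * v (S m) (skip i))%C).
    destruct (IH w) as [d [[j [Hj Hdj]] Hd]].
    set (e := (- sum_n (fun j => d j * (v j i0 / v (S m) i0)) m)%C).
    exists (fun j => if (j =? S m)%nat then e else d j). split.
    { exists j. split; [lia|]. now rewrite (proj2 (Nat.eqb_neq j (S m))) by lia. }
    intros i Hi.
    assert (Hcomb : sum_n (fun j => (if (j =? S m)%nat then e else d j) * v j i)%C (S m)
                    = sum_n (fun j => d j * (v j i - v j i0 / v (S m) i0 * v (S m) i))%C m).
    { rewrite sum_Sn. cbv beta. rewrite Nat.eqb_refl.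
      rewrite (sum_n_Cext_loc (fun j => (if (j =? S m)%nat then e else d j) * v j i)%C
                              (fun j => d j * v j i)%C)
        by (intros j' Hj'; now rewrite (proj2 (Nat.eqb_neq j' (S m))) by lia).
      rewrite (sum_n_Cext_loc (fun j => d j * (v j i - v j i0 / v (S m) i0 * v (S m) i))%C
                 (fun j => d j * v j i + d j * (v j i0 / v (S m) i0) * - v (S m) i)%C)
        by (intros; ring).
      rewrite sum_n_Cplus, sum_n_Cmult_r. unfold e. cbn -[sum_n]. ring. }
    rewrite Hcomb. destruct (Nat.eq_dec i i0) as [->|Hne].
    + rewrite (sum_n_single _ _ O) by (lia || (intros; field; exact Hpiv)). field. exact Hpiv.
    + set (i' := if (i <? i0)%nat then i else (i - 1)%nat).
      assert (Hskip : skip i' = i).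
      { unfold skip, i'. destruct (Nat.ltb_spec i i0) as [Hlt|Hge].
        - now rewrite (proj2 (Nat.ltb_lt i i0) Hlt).
        - rewrite (proj2 (Nat.ltb_ge (i - 1) i0)) by lia. lia. }
      rewrite <- Hskip.
      apply (Hd i'). unfold i'. destruct (Nat.ltb_spec i i0); lia.
  - exists (fun j => if (j =? S m)%nat then 1%C else 0%C). split.
    { exists (S m). rewrite Nat.eqb_refl. split; [lia | apply C1_nz]. }
    intros i Hi. rewrite (sum_n_single _ _ (S m)); [| lia |].
    + assert (Hv : v (S m) i = 0).
      { apply NNPP. intros Hne. apply Hzero. exists i. auto. }
      rewrite Nat.eqb_refl, Hv. ring.
    + intros j Hj Hne. apply Nat.eqb_neq in Hne. rewrite Hne. ring.
Qed.

Lemma gronwall_zero (F dF : R -> R) (K : R) :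
  (forall x, is_derive F x (dF x)) -> (forall x, 0 <= F x) -> F 0 = 0 ->
  (forall x, Rabs (dF x) <= K * F x) -> forall x, F x = 0.
Proof.
  intros HF Hpos H0 Hbound x.
  (* With [s] the sign of [x], [F y * exp (- s K y)] is nonincreasing from [0] towards [x]. *)
  assert (Hsign : forall s, s * s = 1 -> 0 < s * x -> F x = 0).
  { intros s Hs Hsx.
    set (G := fun y => F y * exp (- (s * K) * y)).
    set (dG := fun y => (dF y - s * K * F y) * exp (- (s * K) * y)).
    assert (HG : forall y, is_derive G y (dG y)).
    { intros y. unfold G, dG.
      replace ((dF y - s * K * F y) * exp (- (s * K) * y))
        with (dF y * exp (- (s * K) * y) + F y * (- (s * K) * exp (- (s * K) * y))) by ring.
      apply (is_derive_mult F (fun y => exp (- (s * K) * y)));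
        [apply HF | auto_derive; [easy | ring] | intros; apply Rmult_comm]. }
    destruct (MVT_gen G 0 x dG) as [c [_ Hc]].
    { intros y _. apply HG. }
    { intros y _. exact (is_derive_continuity_pt _ _ _ (HG y)). }
    assert (Hs1 : s * dF c <= Rabs (dF c)).
    { assert (Habs_s : Rabs s * Rabs s = 1) by (now rewrite <- Rabs_mult, Hs, Rabs_R1).
      pose proof (Rle_abs (s * dF c)) as Hle. rewrite Rabs_mult in Hle.
      pose proof (Rabs_pos s). pose proof (Rabs_pos (dF c)). nra. }
    unfold G, dG in Hc. rewrite H0, Rmult_0_l, Rminus_0_r, Rminus_0_r in Hc.
    assert (Hdir : (dF c - s * K * F c) * x <= 0).
    { replace ((dF c - s * K * F c) * x) with ((s * dF c - s * s * K * F c) * (s * x))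
        by (transitivity ((dF c - s * K * F c) * x * (s * s)); [ring | rewrite Hs; ring]).
      rewrite Hs. pose proof (Hbound c). nra. }
    pose proof (Hpos x). pose proof (exp_pos (- (s * K) * x)). pose proof (exp_pos (- (s * K) * c)).
    assert (Hle : F x * exp (- (s * K) * x) <= 0).
    { rewrite Hc. replace ((dF c - s * K * F c) * exp (- (s * K) * c) * x)
        with ((dF c - s * K * F c) * x * exp (- (s * K) * c)) by ring. nra. }
    apply Rle_antisym; [|lra].
    apply (Rmult_le_reg_r (exp (- (s * K) * x))); [lra | rewrite Rmult_0_l; lra]. }
  destruct (Rtotal_order x 0) as [Hneg|[->|Hpos']];
    [apply (Hsign (-1)); lra | exact H0 | apply (Hsign 1); lra].
Qed.

Section Solutions.

Variables (n : nat) (p : nat -> R -> C) (lambda : C).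

Definition is_solution (E : nat -> R -> C) : Prop :=
  (forall k x, (k < n)%nat -> is_derive (E k) x (E (S k) x)) /\
  (forall x, (E n x + sum_n (fun k => p k x * E k x) (n - 2))%C = (lambda * E O x)%C).

Lemma is_solution_shift (E : nat -> R -> C) a :
  (forall k x, (k <= n - 2)%nat -> p k (x + a) = p k x) ->
  is_solution E -> is_solution (fun k x => E k (x + a)).
Proof.
  intros Hp [Hd Heq]. split.
  - intros k x Hk. now apply is_derive_shift, Hd.
  - intros x. rewrite <- (Heq (x + a)). f_equal.
    apply sum_n_Cext_loc. intros k Hk. now rewrite Hp.
Qed.

Lemma is_solution_lincomb (c : nat -> C) (F : nat -> nat -> R -> C) N :
  (forall j, (j <= N)%nat -> is_solution (F j)) ->
  is_solution (fun k x => sum_n (fun j => c j * F j k x)%C N).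
Proof.
  intros HF. split.
  - intros k x Hk.
    apply (is_derive_sum_n (V := C_R_NormedModule) (fun j y => c j * F j k y)%C).
    intros j Hj. now apply is_derive_Cmult_l, HF.
  - intros x. cbv beta.
    rewrite (sum_n_Cext_loc (fun k => p k x * sum_n (fun j => c j * F j k x) N)%C
                            (fun k => sum_n (fun j => p k x * (c j * F j k x)) N)%C)
      by (intros k _; symmetry; exact (sum_n_Cmult_l (p k x) (fun j => c j * F j k x)%C N)).
    rewrite (sum_n_switch (G := C_AbelianMonoid)).
    rewrite <- sum_n_Cplus, <- sum_n_Cmult_l.
    apply sum_n_Cext_loc. intros j Hj.
    rewrite (sum_n_Cext_loc (fun i => p i x * (c j * F j i x))%C
                            (fun i => c j * (p i x * F j i x))%C) by (intros i _; ring).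
    rewrite (sum_n_Cmult_l (c j) (fun i => p i x * F j i x)%C).
    transitivity (c j * (F j n x + sum_n (fun i => p i x * F j i x) (n - 2)))%C; [ring|].
    rewrite (proj2 (HF j Hj) x). ring.
Qed.

Lemma Cmod_solution_top_le (E : nat -> R -> C) M r x :
  (0 < n)%nat -> (forall k y, (k <= n - 2)%nat -> Cmod (p k y) <= M) ->
  is_solution E -> (forall k, (k < n)%nat -> Cmod (E k x) <= r) ->
  Cmod (E n x) <= (Cmod lambda + INR n * M) * r.
Proof.
  intros Hn Hp [_ Heq] Hr.
  assert (Hr0 : 0 <= r) by (eapply Rle_trans; [apply Cmod_ge_0 | apply (Hr O Hn)]).
  assert (HM : 0 <= M) by (eapply Rle_trans; [apply Cmod_ge_0 | apply (Hp O x); lia]).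
  replace (E n x) with (lambda * E O x - sum_n (fun k => p k x * E k x) (n - 2))%C
    by (rewrite <- Heq; ring).
  eapply Rle_trans; [apply Cmod_triangle|]. rewrite Cmod_opp, Cmod_mult.
  assert (Hsum : Cmod (sum_n (fun k => p k x * E k x)%C (n - 2)) <= INR n * M * r).
  { eapply Rle_trans; [apply Cmod_sum_n_le|].
    eapply Rle_trans.
    { apply (sum_Rle _ (fun _ => M * r)). intros k Hk. rewrite Cmod_mult.
      apply Rmult_le_compat; auto using Cmod_ge_0. apply Hr. lia. }
    rewrite sum_cte. replace (INR n * M * r) with (M * r * INR n) by ring.
    apply Rmult_le_compat_l; [now apply Rmult_le_pos | apply le_INR; lia]. }
  pose proof (Rmult_le_compat_l _ _ _ (Cmod_ge_0 lambda) (Hr O Hn)). lra.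
Qed.

Definition energy (E : nat -> R -> C) (x : R) : R :=
  sum_f_R0 (fun i => Cmod (E i x) ^ 2) (n - 1).

Lemma is_derive_energy (E : nat -> R -> C) x : (0 < n)%nat -> is_solution E ->
  is_derive (energy E) x (sum_f_R0 (fun i => 2 * Re (Cconj (E i x) * E (S i) x)) (n - 1)).
Proof.
  intros Hn [Hd _]. unfold energy. rewrite <- sum_n_Reals.
  apply (is_derive_ext (fun y => sum_n (fun i => Cmod (E i y) ^ 2) (n - 1)));
    [intros y; apply sum_n_Reals|].
  apply (is_derive_sum_n (V := R_NormedModule) (fun i y => Cmod (E i y) ^ 2)).
  intros i Hi. apply is_derive_Cmod2, Hd. lia.
Qed.

Lemma energy_derivative_le (E : nat -> R -> C) M x : (0 < n)%nat ->
  (forall k y, (k <= n - 2)%nat -> Cmod (p k y) <= M) -> is_solution E ->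
  Rabs (sum_f_R0 (fun i => 2 * Re (Cconj (E i x) * E (S i) x)) (n - 1))
    <= 2 * (1 + Cmod lambda + INR n * M) ^ 2 * INR n * energy E x.
Proof.
  intros Hn Hp HE.
  set (r := sqrt (energy E x)). set (L := 1 + Cmod lambda + INR n * M).
  assert (Hr0 : 0 <= r) by apply sqrt_pos.
  assert (HM : 0 <= M) by (eapply Rle_trans; [apply Cmod_ge_0 | apply (Hp O x); lia]).
  assert (HL : 1 <= L) by (unfold L; pose proof (Cmod_ge_0 lambda); pose proof (pos_INR n); nra).
  assert (Hlow : forall i, (i < n)%nat -> Cmod (E i x) <= r).
  { intros i Hi. rewrite <- (sqrt_pow2 (Cmod (E i x))) by apply Cmod_ge_0.
    apply sqrt_le_1_alt, (sum_f_R0_ge_term (fun i => Cmod (E i x) ^ 2));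
      [intros; apply pow2_ge_0 | lia]. }
  assert (Hall : forall i, (i <= n)%nat -> Cmod (E i x) <= L * r).
  { intros i Hi. destruct (Nat.eq_dec i n) as [->|Hne].
    - pose proof (Cmod_solution_top_le E M r x Hn Hp HE Hlow). unfold L. nra.
    - pose proof (Hlow i ltac:(lia)). nra. }
  eapply Rle_trans; [apply Rsum_abs|].
  eapply Rle_trans.
  { apply (sum_Rle _ (fun _ => 2 * ((L * r) * (L * r)))). intros i Hi.
    rewrite Rabs_mult, Rabs_pos_eq by lra.
    pose proof (Re_Cconj_mult_le (E i x) (E (S i) x)).
    pose proof (Hall i ltac:(lia)). pose proof (Hall (S i) ltac:(lia)).
    pose proof (Cmod_ge_0 (E i x)). pose proof (Cmod_ge_0 (E (S i) x)).
    apply Rmult_le_compat_l; [lra|]. eapply Rle_trans; [eassumption|].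
    apply Rmult_le_compat; assumption. }
  rewrite sum_cte. replace (S (n - 1)) with n by lia.
  replace (energy E x) with (r * r)
    by (unfold r; apply sqrt_sqrt, cond_pos_sum; intros; apply pow2_ge_0).
  fold L. nra.
Qed.

Lemma is_solution_zero_data (E : nat -> R -> C) M : (0 < n)%nat ->
  (forall k y, (k <= n - 2)%nat -> Cmod (p k y) <= M) -> is_solution E ->
  (forall i, (i < n)%nat -> E i 0 = 0%C) -> forall x, E O x = 0%C.
Proof.
  intros Hn Hp HE H0 x.
  assert (Henergy : energy E x = 0).
  { apply (gronwall_zero (energy E) _ (2 * (1 + Cmod lambda + INR n * M) ^ 2 * INR n)
           (fun y => is_derive_energy E y Hn HE)).
    - intros y. apply cond_pos_sum. intros; apply pow2_ge_0.
    - unfold energy. rewrite (sum_eq _ (fun _ => 0)), sum_cte; [ring|].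
      intros i Hi. rewrite H0 by lia. rewrite Cmod_0. ring.
    - intros y. now apply energy_derivative_le. }
  assert (Hsq : Cmod (E O x) ^ 2 <= 0).
  { rewrite <- Henergy.
    apply (sum_f_R0_ge_term (fun i => Cmod (E i x) ^ 2)); [intros; apply pow2_ge_0 | lia]. }
  apply Cmod_eq_0. pose proof (Cmod_ge_0 (E O x)). nra.
Qed.

End Solutions.

Lemma periodic_shift_Z {T : Type} (f : R -> T) b :
  (forall x, f (x + b) = f x) -> forall (k : Z) x, f (x + IZR k * b) = f x.
Proof.
  intros Hf.
  assert (Hnat : forall (j : nat) x, f (x + INR j * b) = f x).
  { induction j as [|j IH]; intros x.
    - now rewrite Rmult_0_l, Rplus_0_r.
    - rewrite <- (IH x), <- (Hf (x + INR j * b)), S_INR. f_equal. ring. }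
  intros k x. destruct (Z_le_gt_dec 0 k) as [Hk|Hk].
  - rewrite <- (Z2Nat.id k Hk), <- INR_IZR_INZ. apply Hnat.
  - rewrite <- (Hnat (Z.to_nat (- k)) (x + IZR k * b)). f_equal.
    rewrite INR_IZR_INZ, Z2Nat.id by lia. rewrite opp_IZR. ring.
Qed.

Lemma periodic_continuous_bounded (g : R -> R) b : 0 < b ->
  (forall x, continuity_pt g x) -> (forall x, g (x + b) = g x) ->
  exists M, forall x, g x <= M.
Proof.
  intros Hb Hg Hper.
  destruct (continuity_ab_maj g 0 b ltac:(lra) (fun x _ => Hg x)) as [xmax [Hmax _]].
  exists (g xmax). intros x.
  set (q := x / b). set (k := Int_part q).
  destruct (base_Int_part q) as [Hk1 Hk2]. fold k in Hk1, Hk2.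
  assert (Hx : x = q * b) by (unfold q; field; lra).
  replace x with ((x - IZR k * b) + IZR k * b) by ring.
  rewrite (periodic_shift_Z g b Hper). apply Hmax.
  rewrite Hx. split; nra.
Qed.

Lemma smooth_periodic_family_bounded (p : nat -> R -> C) b N : 0 < b ->
  (forall k, (k <= N)%nat -> smooth (p k) /\ periodic (p k) b) ->
  exists M, forall k x, (k <= N)%nat -> Cmod (p k x) <= M.
Proof.
  intros Hb Hp.
  destruct (periodic_continuous_bounded (fun x => sum_f_R0 (fun k => Cmod (p k x)) N) b Hb)
    as [M HM].
  - intros x. apply (continuity_pt_finite_SF (fun k y => Cmod (p k y))). intros k Hk.
    destruct (Hp k Hk) as [[D [HD0 HD]] _].
    apply (is_derive_continuity_pt_Cmod _ x (D 1%nat x)).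
    apply (is_derive_ext (D O)); [exact HD0 | apply HD].
  - intros x. apply sum_eq. intros k Hk. now rewrite (proj2 (Hp k Hk)).
  - exists M. intros k x Hk. eapply Rle_trans; [|apply (HM x)].
    apply (sum_f_R0_ge_term (fun k => Cmod (p k x))); [intros; apply Cmod_ge_0 | exact Hk].
Qed.

Lemma exists_least_nat (P : nat -> Prop) j :
  P j -> exists j0, P j0 /\ forall j', (j' < j0)%nat -> ~ P j'.
Proof.
  intros Hj.
  destruct (Wf_nat.dec_inh_nat_subset_has_unique_least_element P (fun k => classic (P k)))
    as [j0 [[HP Hmin] _]]; [now exists j|].
  exists j0. split; [exact HP|]. intros j' Hlt HP'. specialize (Hmin j' HP'). lia.
Qed.

Lemma exists_greatest_nat (P : nat -> Prop) N :
  (exists j, (j <= N)%nat /\ P j) ->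
  exists j, (j <= N)%nat /\ P j /\ forall j', (j < j' <= N)%nat -> ~ P j'.
Proof.
  intros [j [Hj HP]].
  destruct (exists_least_nat (fun i => (i <= N)%nat /\ P (N - i)%nat) (N - j))
    as [i [[Hi HPi] Hmin]].
  { split; [lia|]. now replace (N - (N - j))%nat with j by lia. }
  exists (N - i)%nat. split; [lia|]. split; [exact HPi|].
  intros j' Hj' HP'. apply (Hmin (N - j')%nat); [lia|].
  split; [lia|]. now replace (N - (N - j'))%nat with j' by lia.
Qed.

Lemma recurrence_solve (n : nat) (c : nat -> C) (a : Z -> C) m j0 :
  (j0 <= n)%nat -> c j0 <> 0 ->
  sum_n (fun j => c j * a (m + Z.of_nat j)%Z)%C n = 0 :> C ->
  (forall j, (j <= n)%nat -> j <> j0 -> c j = 0 \/ a (m + Z.of_nat j)%Z = 0) ->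
  a (m + Z.of_nat j0)%Z = 0.
Proof.
  intros Hj0 Hc Hrel Hothers.
  rewrite (sum_n_single _ _ j0) in Hrel; [| exact Hj0 |].
  - apply NNPP. intros Ha. exact (Cmult_neq_0 _ _ Hc Ha Hrel).
  - intros j Hj Hne. destruct (Hothers j Hj Hne) as [-> | ->]; ring.
Qed.

Lemma linear_recurrence_vanishes (n : nat) (c : nat -> C) (a : Z -> C) :
  (exists j, (j <= n)%nat /\ c j <> 0) ->
  (forall m, sum_n (fun j => c j * a (m + Z.of_nat j)%Z)%C n = 0 :> C) ->
  (forall m, (0 <= m < Z.of_nat n)%Z -> a m = 0) ->
  forall m, a m = 0.
Proof.
  intros Hc Hrel Hinit.
  destruct (exists_greatest_nat (fun j => c j <> 0) n Hc) as [jmax [Hjmax [Hcmax Hgt]]].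
  destruct Hc as [j [_ Hcj]].
  destruct (exists_least_nat (fun j => c j <> 0) j Hcj) as [jmin [Hcmin Hlt]].
  assert (Hjmin : (jmin <= jmax)%nat).
  { destruct (Nat.le_gt_cases jmin jmax) as [|Hgt']; [assumption|].
    exfalso. exact (Hlt jmax Hgt' Hcmax). }
  (* Solve the recurrence forward through [c jmax] and backward through [c jmin],
     growing the window [-N, n - 1 + N] on which [a] vanishes. *)
  assert (Hwindow : forall N : nat, forall m,
            (- Z.of_nat N <= m <= Z.of_nat n - 1 + Z.of_nat N)%Z -> a m = 0).
  { induction N as [|N IH]; intros m Hm; [apply Hinit; lia|].
    destruct (Z.eq_dec m (Z.of_nat n + Z.of_nat N)) as [Htop|Hntop].
    - replace m with (m - Z.of_nat jmax + Z.of_nat jmax)%Z by lia.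
      apply (recurrence_solve n c a _ jmax Hjmax Hcmax (Hrel _)).
      intros j' Hj' Hne. destruct (Nat.lt_ge_cases j' jmax).
      + right. apply IH. lia.
      + left. apply NNPP. intros Hc'. apply (Hgt j'); [lia | exact Hc'].
    - destruct (Z.eq_dec m (- Z.of_nat N - 1)) as [Hbot|Hnbot]; [|apply IH; lia].
      replace m with (m - Z.of_nat jmin + Z.of_nat jmin)%Z by lia.
      apply (recurrence_solve n c a _ jmin ltac:(lia) Hcmin (Hrel _)).
      intros j' Hj' Hne. destruct (Nat.lt_ge_cases j' jmin).
      + left. apply NNPP. intros Hc'. apply (Hlt j'); [lia | exact Hc'].
      + right. apply IH. lia. }
  intros m. apply (Hwindow (S (Z.to_nat (Z.abs m)))). lia.
Qed.

Theorem corollary4 (n : nat) (b : R) (p : nat -> R -> C)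
  (psi : R -> C) (lambda : C) (D : nat -> R -> C) :
  (2 <= n)%nat -> 0 < b ->
  (forall k : nat, (k <= n - 2)%nat -> smooth (p k) /\ periodic (p k) b) ->
  derivs_upto psi n D ->
  (forall x : R,
      (D n x + sum_n (fun k => p k x * D k x) (n - 2))%C = (lambda * psi x)%C) ->
  (forall j : nat, (j <= n - 1)%nat -> psi (INR j * b) = 0%C) ->
  (exists x : R, psi x <> 0%C) ->
  forall k : Z, psi (IZR k * b) = 0%C.
Proof.
  intros Hn Hb Hp [HD0 HD] Heq Hzero _.
  destruct (smooth_periodic_family_bounded p b (n - 2) Hb Hp) as [M HM].
  assert (Hsol : is_solution n p lambda D).
  { split; [exact HD | intros x; rewrite HD0; apply Heq]. }
  assert (Hshift : forall j, is_solution n p lambda (fun k x => D k (x + INR j * b))).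
  { intros j. apply is_solution_shift; [|exact Hsol]. intros k x Hk.
    rewrite INR_IZR_INZ. apply periodic_shift_Z, (proj2 (Hp k Hk)). }
  destruct (exists_nontrivial_relation n (fun j i => D i (INR j * b))) as [c [Hc Hrel]].
  set (E := (fun k x => sum_n (fun j => c j * D k (x + INR j * b)%R)%C n) : nat -> R -> C).
  assert (HE0 : forall x, E O x = 0%C).
  { apply (is_solution_zero_data n p lambda E M); [lia | exact HM | |].
    - apply is_solution_lincomb. intros j _. apply Hshift.
    - intros i Hi. rewrite <- (Hrel i Hi). apply sum_n_Cext_loc. intros j _.
      now rewrite Rplus_0_l. }
  apply (linear_recurrence_vanishes n c (fun m => psi (IZR m * b)) Hc).
  - intros m. rewrite <- (HE0 (IZR m * b)). apply sum_n_Cext_loc. intros j _.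
    rewrite <- HD0, plus_IZR, <- INR_IZR_INZ. f_equal. f_equal. ring.
  - intros m Hm. rewrite <- (Z2Nat.id m), <- INR_IZR_INZ by lia. apply Hzero. lia.
Qed.
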